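(* Let $G=(V,E)$ be an $n$-vertex graph, $q>0$ an integer, and $0<\alpha\le1$. Let $V_\alpha=\{v\in V: r(v)\ge\alpha\}$ and $c_q=\sum_{i=0}^{q}q^i$. Then every $v\in V_\alpha$ satisfies $\deg(v)\ge n\alpha/c_q$.
   Context: $q$-random BFS ($q$-RBFS) from a vertex $v$ in the random neighbor model (where a random neighbor query for $u$ returns a uniformly random neighbor of $u$): initialize a queue $Q=(v)$, level $\ell[v]=0$ (all others $\infty$), and $H=(\{v\},\emptyset)$ rooted at $v$; while $Q$ is nonempty, pop $u$ and make $q$ independent random neighbor queries for $u$ obtaining $s_{u,1},\dots,s_{u,q}$; for each $i$ add $s_{u,i}$ and the edge $\{u,s_{u,i}\}$ to $H$, and if $\ell[u]<q-1$ and $\ell[s_{u,i}]=\infty$, set $\ell[s_{u,i}]=\ell[u]+1$ and enqueue $s_{u,i}$; return $H$ (undirected, simple). The reach probability $r(v)$ of a vertex $v$ is the probability that a $q$-RBFS started at a uniformly random vertex of $V$ reaches (includes) $v$. *)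

From mathcomp Require Import all_boot all_order all_algebra.
Set Implicit Arguments. Unset Strict Implicit. Unset Printing Implicit Defensive.
Import Order.TTheory GRing.Theory Num.Theory.
Local Open Scope ring_scope.

Section RBFS.
Variables (V : finType) (e : rel V) (R : realFieldType) (q : nat).

Definition deg (u : V) : nat := #|[set w | e u w]|.

Definition avg_nbr (u : V) (f : V -> R) : R :=
  (\sum_(w | e u w) f w) / (deg u)%:R.

(* One query of u returning w: add w to H; if l[u] < q-1 and l[w] = oo,
   set l[w] := l[u]+1 and enqueue w. *)
Definition rbfs_step (u w : V) (Q : seq V) (lev : V -> option nat)
    (H : {set V}) : seq V * (V -> option nat) * {set V} :=
  let H' := w |: H in
  match lev u with
  | Some lu =>
      if (lu < q.-1)%N && (lev w == None) then
        (rcons Q w, (fun x => if x == w then Some lu.+1 else lev x), H')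
      else (Q, lev, H')
  | None => (Q, lev, H')
  end.

(* Probability (over the random neighbor queries) that the remaining
   q-RBFS run, from state (Q, lev, H), ends with target in H.
   fuel bounds the number of pops (each vertex is enqueued at most once). *)
Fixpoint rbfs_prob (target : V) (fuel : nat) (Q : seq V)
    (lev : V -> option nat) (H : {set V}) {struct fuel} : R :=
  match fuel with
  | O => (target \in H)%:R
  | fuel'.+1 =>
      match Q with
      | [::] => (target \in H)%:R
      | u :: Q' =>
          let fix queries (k : nat) (Q0 : seq V) (lev0 : V -> option nat)
                (H0 : {set V}) : R :=
            match k with
            | O => rbfs_prob target fuel' Q0 lev0 H0
            | k'.+1 =>
                avg_nbr u (fun w =>
                  let '(Q1, lev1, H1) := rbfs_step u w Q0 lev0 H0 in
                  queries k' Q1 lev1 H1)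
            end
          in queries q Q' lev H
      end
  end.

Definition rbfs_reach_from (s target : V) : R :=
  rbfs_prob target #|V|.+1 [:: s]
    (fun x => if x == s then Some 0%N else None) [set s].

Definition reach (v : V) : R :=
  (\sum_(s : V) rbfs_reach_from s v) / #|V|%:R.

End RBFS.

Definition c_q (q : nat) : nat := (\sum_(i < q.+1) q ^ i)%N.

From mathcomp Require Import all_boot all_order all_algebra.
From mathcomp Require Import zify ring lra.
Set Implicit Arguments. Unset Strict Implicit. Unset Printing Implicit Defensive.
Import Order.TTheory GRing.Theory Num.Theory.
Local Open Scope ring_scope.

(* The probability that a q-RBFS reaches t is at most the expected number of
   queries answered by t.  A vertex enqueued at level l spawns, in
   expectation, a tree of q-fold random neighbour queries of depth q - l, so
   this probability is bounded by a potential (the indicator of t already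
   being reached plus the expected hits of t below every queued vertex) whose
   expectation does not increase along the run.  Since the measure deg(s) is
   stationary for a random neighbour step, the depth-j trees rooted at all s
   satisfy sum_s deg(s) hits_j(s) = deg(t) (q + ... + q^j); as every degree
   is at least 1, summing over the start vertex gives n r(t) <= deg(t) c_q. *)

Section NeighbourAverage.
Variables (V : finType) (e : rel V) (R : realFieldType).

Lemma avg_nbr_ge0 u (f : V -> R) :
  (forall w, e u w -> 0 <= f w) -> 0 <= avg_nbr e u f.
Proof.
move=> f_ge0; rewrite /avg_nbr mulr_ge0 ?invr_ge0 ?ler0n //.
by apply: sumr_ge0 => w /f_ge0.
Qed.

Lemma ler_avg_nbr u (f g : V -> R) :
  (forall w, e u w -> f w <= g w) -> avg_nbr e u f <= avg_nbr e u g.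
Proof.
move=> le_fg; rewrite /avg_nbr ler_wpM2r ?invr_ge0 ?ler0n //.
by apply: ler_sum => w /le_fg.
Qed.

Lemma avg_nbrD u (f g : V -> R) :
  avg_nbr e u (fun w => f w + g w) = avg_nbr e u f + avg_nbr e u g.
Proof. by rewrite /avg_nbr big_split mulrDl. Qed.

Lemma avg_nbr_cst u (c : R) : (0 < deg e u)%N -> avg_nbr e u (fun=> c) = c.
Proof.
move=> deg_gt0; rewrite /avg_nbr sumr_const -[c *+ _]mulr_natr -mulrA.
have -> : #|e u| = deg e u by rewrite /deg cardsE.
by rewrite mulfV ?mulr1 // pnatr_eq0 -lt0n.
Qed.

Lemma mul_deg_avg_nbr u (f : V -> R) :
  (deg e u)%:R * avg_nbr e u f = \sum_(w | e u w) f w.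
Proof.
rewrite /avg_nbr mulrCA; case: (posnP (deg e u)) => [deg0 | deg_gt0].
  rewrite big_pred0 ?mul0r // => w; apply/negbTE/negP => euw.
  by move/cards0_eq/setP/(_ w): deg0; rewrite inE euw inE.
by rewrite mulfV ?mulr1 // pnatr_eq0 -lt0n.
Qed.

Lemma sum_deg_avg_nbr (f : V -> R) : symmetric e ->
  \sum_u (deg e u)%:R * avg_nbr e u f = \sum_w (deg e w)%:R * f w.
Proof.
move=> e_sym; under eq_bigr do rewrite mul_deg_avg_nbr big_mkcond.
rewrite exchange_big; apply: eq_bigr => w _.
rewrite -big_mkcond sumr_const mulr_natl; congr (_ *+ _).
by rewrite /deg cardsE; apply: eq_card => u; rewrite unfold_in /= e_sym.
Qed.

End NeighbourAverage.

Section ReachPotential.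
Variables (V : finType) (e : rel V) (R : realFieldType) (q : nat) (t : V).

(* [hits j x]: expected number of answers [t] in a depth-[j] tree of random
   neighbour queries rooted at [x], every node querying [q] times. *)
Fixpoint hits (j : nat) (x : V) : R :=
  if j is j'.+1 then q%:R * avg_nbr e x (fun w => (w == t)%:R + hits j' w)
  else 0.

Lemma hits_ge0 j x : 0 <= hits j x.
Proof.
elim: j x => [|j IHj] x //=; rewrite mulr_ge0 ?ler0n //.
by apply: avg_nbr_ge0 => w _; rewrite addr_ge0 ?ler0n.
Qed.

Lemma sum_deg_hitsS j : symmetric e ->
  \sum_x (deg e x)%:R * hits j.+1 x =
  q%:R * ((deg e t)%:R + \sum_x (deg e x)%:R * hits j x).
Proof.
move=> e_sym; under eq_bigr do rewrite /= mulrCA.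
rewrite -mulr_sumr sum_deg_avg_nbr //; congr (_ * _).
under eq_bigr do rewrite mulrDr; rewrite big_split /=; congr (_ + _).
rewrite (bigD1 t) //= eqxx mulr1 big1 ?addr0 // => x /negbTE ->.
by rewrite mulr0.
Qed.

Lemma sum_deg_hits j : symmetric e ->
  \sum_x (deg e x)%:R * hits j x + (deg e t)%:R =
  (deg e t)%:R * \sum_(i < j.+1) q%:R ^+ i.
Proof.
move=> e_sym; elim: j => [|j IHj].
  by rewrite big1 => [|x _]; rewrite ?big_ord1 ?mulr0 //= add0r mulr1.
rewrite sum_deg_hitsS // big_ord_recl expr0.
under [in RHS]eq_bigr do rewrite lift0 exprS.
rewrite -mulr_sumr [X in _ = X]mulrDr [X in _ = _ + X]mulrCA -IHj; ring.
Qed.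

Definition levelled (Q : seq V) (lev : V -> option nat) :=
  all (fun x => lev x != None) Q.

(* The answers to a vertex at level [l] are enqueued only while [l < q.-1],
   so its queries span a tree of depth [q - l]; it is written [(q.-1 - l).+1]
   so that the truncated subtraction still gives depth 1 at [l >= q.-1]. *)
Definition queued_hits (lev : V -> option nat) (x : V) : R :=
  if lev x is Some l then hits (q.-1 - l).+1 x else 0.

Definition potential (Q : seq V) (lev : V -> option nat) (H : {set V}) : R :=
  (t \in H)%:R + \sum_(x <- Q) queued_hits lev x.

Lemma potential_ge Q lev (H : {set V}) : (t \in H)%:R <= potential Q lev H.
Proof.
rewrite /potential lerDl; apply: sumr_ge0 => x _.
by rewrite /queued_hits; case: (lev x) => // l; apply: hits_ge0.
Qed.

Lemma rbfs_step_potential u lu w Q0 lev0 (H0 : {set V}) Q1 lev1 H1 :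
  levelled Q0 lev0 -> lev0 u = Some lu ->
  rbfs_step q u w Q0 lev0 H0 = (Q1, lev1, H1) ->
  [/\ levelled Q1 lev1, lev1 u = Some lu &
      potential Q1 lev1 H1 <=
      potential Q0 lev0 H0 + ((w == t)%:R + hits (q.-1 - lu) w)].
Proof.
move=> Q0_lev lev0u; rewrite /rbfs_step lev0u.
have hit_w : (t \in w |: H0)%:R <= (t \in H0)%:R + (w == t)%:R :> R.
  by rewrite in_setU1 eq_sym; case: (w == t); case: (t \in H0) => /=; lra.
have := hits_ge0 (q.-1 - lu) w.
case: ifP => [/andP[lt_lu /eqP lev0w] | _] hits_w [<- <- <-]; last first.
  by split=> //; rewrite /potential; lra.
have neq_w x : x \in Q0 -> (x == w) = false.
  by move=> xQ0; apply: contraTF (allP Q0_lev x xQ0) => /eqP ->; rewrite lev0w.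
have neq_uw : (u == w) = false.
  by apply/negbTE/eqP => uw; rewrite uw lev0w in lev0u.
split; [| by rewrite neq_uw |].
  rewrite /levelled all_rcons eqxx; apply/allP => x xQ0.
  by rewrite neq_w //; apply: (allP Q0_lev).
rewrite /potential -cats1 big_cat /= big_seq1 {2}/queued_hits eqxx.
have -> : (q.-1 - lu.+1).+1 = (q.-1 - lu)%N by lia.
rewrite (eq_big_seq (queued_hits lev0)) => [|x xQ0]; last first.
  by rewrite /queued_hits neq_w.
lra.
Qed.

(* The inner loop of [rbfs_prob], named so as to allow induction on [k]. *)
Definition rbfs_queries (u : V) (fuel : nat) :=
  fix queries (k : nat) (Q0 : seq V) (lev0 : V -> option nat)
      (H0 : {set V}) : R :=
    if k is k'.+1 then
      avg_nbr e u (fun w =>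
        let '(Q1, lev1, H1) := rbfs_step q u w Q0 lev0 H0 in
        queries k' Q1 lev1 H1)
    else rbfs_prob e R q t fuel Q0 lev0 H0.

Lemma rbfs_prob_cons fuel u Q lev (H : {set V}) :
  rbfs_prob e R q t fuel.+1 (u :: Q) lev H = rbfs_queries u fuel q Q lev H.
Proof. by []. Qed.

Lemma rbfs_queries_le u lu fuel : (0 < deg e u)%N ->
  (forall Q lev (H : {set V}), levelled Q lev ->
     rbfs_prob e R q t fuel Q lev H <= potential Q lev H) ->
  forall k Q0 lev0 (H0 : {set V}), levelled Q0 lev0 -> lev0 u = Some lu ->
  rbfs_queries u fuel k Q0 lev0 H0 <= potential Q0 lev0 H0 +
    k%:R * avg_nbr e u (fun w => (w == t)%:R + hits (q.-1 - lu) w).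
Proof.
move=> deg_gt0 prob_le; elim=> [|k IHk] Q0 lev0 H0 Q0_lev lev0u /=.
  by rewrite mul0r addr0; apply: prob_le.
set g := fun w => _ + _; set P := potential _ _ _.
apply: (@le_trans _ _ (avg_nbr e u (fun w => P + k%:R * avg_nbr e u g + g w))).
  apply: ler_avg_nbr => w _; case E: rbfs_step => [[Q1 lev1] H1].
  have [Q1_lev lev1u le_P] := rbfs_step_potential Q0_lev lev0u E.
  apply: le_trans (IHk _ _ _ Q1_lev lev1u) _.
  by move: le_P; rewrite /P /g; set A := avg_nbr e u _; lra.
by rewrite avg_nbrD avg_nbr_cst // mulrSr; lra.
Qed.

Lemma rbfs_prob_le_potential : (forall u, 0 < deg e u)%N ->
  forall fuel Q lev (H : {set V}), levelled Q lev ->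
  rbfs_prob e R q t fuel Q lev H <= potential Q lev H.
Proof.
move=> deg_gt0; elim=> [|fuel IH] [|u Q] lev H;
  try by move=> _; apply: potential_ge.
rewrite rbfs_prob_cons /levelled /= => /andP[].
case lev_u: (lev u) => [lu|] // _ Q_lev.
apply: le_trans (rbfs_queries_le (deg_gt0 u) IH q H Q_lev lev_u) _.
by rewrite /potential big_cons {2}/queued_hits lev_u /=; lra.
Qed.

Lemma rbfs_reach_from_le s : (forall u, 0 < deg e u)%N -> (0 < q)%N ->
  rbfs_reach_from e R q s t <= (s == t)%:R + hits q s.
Proof.
move=> deg_gt0 q_gt0; rewrite /rbfs_reach_from.
apply: le_trans (@rbfs_prob_le_potential deg_gt0 _ _ _ _ _) _.
  by rewrite /levelled /= eqxx.
by rewrite /potential big_seq1 /queued_hits eqxx in_set1 eq_sym subn0 prednK.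
Qed.

Lemma sum_rbfs_reach_from_le : symmetric e -> (forall u, 0 < deg e u)%N ->
  (0 < q)%N -> \sum_s rbfs_reach_from e R q s t <= (deg e t)%:R * (c_q q)%:R.
Proof.
move=> e_sym deg_gt0 q_gt0.
rewrite /c_q natr_sum; under eq_bigr do rewrite natrX; rewrite -sum_deg_hits //.
apply: le_trans (ler_sum _ (fun s _ => rbfs_reach_from_le s deg_gt0 q_gt0)) _.
rewrite big_split /= (bigD1 t) //= eqxx big1 ?addr0 => [|s];
  last by move/negbTE ->.
rewrite addrC lerD ?ler1n // ler_sum // => s _.
by rewrite ler_peMl ?hits_ge0 ?ler1n.
Qed.

End ReachPotential.

Theorem lemma3p9 (V : finType) (e : rel V) (R : realFieldType) (q : nat)
    (alpha : R) :
  symmetric e -> irreflexive e ->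
  (forall u : V, (0 < deg e u)%N) ->
  (0 < q)%N -> 0 < alpha -> alpha <= 1 ->
  forall v : V, alpha <= reach e R q v ->
    (#|V|%:R * alpha / (c_q q)%:R <= (deg e v)%:R :> R).
Proof.
move=> e_sym _ deg_gt0 q_gt0 _ _ v alpha_le_reach.
have cq_gt0 : (0 < c_q q)%N by rewrite /c_q big_ord_recl expn0.
have V_gt0 : (0 < #|V|)%N by apply/card_gt0P; exists v.
rewrite ler_pdivrMr ?ltr0n // mulrC.
apply: le_trans (sum_rbfs_reach_from_le R v e_sym deg_gt0 q_gt0).
by move: alpha_le_reach; rewrite /reach ler_pdivlMr ?ltr0n.
Qed.
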